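(* Let $F$ be a unit tree and let $!E,G,H$ be units of $F$. If $!E$ dominates $G$ in $F$ and $H$ is a subunit of $G$, then $!E$ dominates $H$ in $F$.
   Context: Formulas are built from atoms by $\neg$ (on atoms only), binary $\wedge,\vee$ and unary $!$ (branching recurrence) and $?$ (branching corecurrence). Fix a formula $\mathbb{F}_0$. Oformulas are occurrences of subformulas of $\mathbb{F}_0$. Politerals are occurrences of literals $P$ or $\neg P$ that are not in the scope of $\neg$; thus an atom $P$ inside $\neg P$ is not a politeral. The modal depth of an oformula is the number of its proper superoccurrences of the form $!E$ or $?E$. A unit is $E[\vec x]$, with $E$ an oformula and $\vec x$ a tuple of infinite bitstrings whose length is the modal depth of $E$. Parenthood: - $G_0[\vec x]$ and $G_1[\vec x]$ are the children of $(G_0\wedge G_1)[\vec x]$ and of $(G_0\vee G_1)[\vec x]$; - the $G[\vec x,y]$, for all infinite bitstrings $y$, are the children of $!G[\vec x]$ and of $?G[\vec x]$. The root is $\mathbb{F}_0[\,]$. ''Subunit'' and ''superunit'' are the reflexive-transitive closures of the child relation and its converse, and ''proper'' means distinct. The $\mathbb{F}_0$-origin $\tilde E$ of $E[\vec x]$ is $E$. $!$-, $?$-, $\wedge$-, $\vee$- and politeral units are those whose origin is of the corresponding form. The smallest common superunit of two units is their common superunit that is a subunit of all their common superunits. $E$ drives $G$ through $H$ iff $H$ is the smallest common superunit of $E,G$ and no proper $?$-superunit of $E$ is a subunit of $H$. A unit tree is a nonempty set $S$ of units such that, for each $E\in S$: all superunits of $E$ are in $S$; if $E$ is a $\wedge$-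 or $\vee$-unit, both children of $E$ are in $S$; and if $E$ is a $!$- or $?$-unit, at least one child of $E$ is in $S$. Runs are sequences of labeled moves $\wp\beta$ with $\wp\in\{\top,\bot\}$. For a run $\Theta$ and a string $\alpha$, $\Theta^{\alpha}$ is obtained by keeping only the labmoves whose move begins with $\alpha$ and deleting that prefix. For an infinite bitstring $y$, $\Theta^{\preceq y}$ is obtained by keeping only the labmoves of the form $\wp\, u.\beta$ with $u$ a finite prefix of $y$ and deleting the prefix ''$u.$''. Fix an arbitrary run $\Omega$. The projection of $\Omega$ on units is defined as follows: on $\mathbb{F}_0[\,]$ it is $\Omega$; if $\Theta$ is the projection on $E[\vec x]$, then the projection on the child $G_i[\vec x]$ of a $\wedge$- or $\vee$-unit is $\Theta^{i.}$, and on the child $G[\vec x,y]$ of a $!$- or $?$-unit it is $\Theta^{\preceq y}$. Politeral units $L,M$ are opposite iff $\tilde L=\neg\tilde M$ (or $\tilde M=\neg\tilde L$) as literals and, for each $\wp\in\{\top,\bot\}$, the set of $\wp$-labeled moves in the projection of $\Omega$ on $L$ equals the set of $\neg\wp$-labeled moves in the projection of $\Omega$ on $M$. For a unit tree $F$ and $!E,G\in F$, a $!E$-over-$G$ domination chain in $F$ is a sequence $L_1,M_1,X_1,\dots,L_n,M_n,X_n$ ($n\ge1$) of units such that, writing $L_{n+1}=G$, for each $i\in\{1,\dots,n\}$: 1. $L_i$ and $M_i$ are opposite politeral units of $F$; 2. $M_i$ drives $L_{i+1}$ through $X_i$; 3. $M_i$ drives no $L_j$ with $i+2\le j\le n+1$;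 4. $M_i$ is not a subunit of $!E$; 5. $L_1$ is a subunit of $!E$. $!E$ dominates $G$ in $F$ iff $!E,G\in F$ and either $G$ is a proper subunit of $!E$ or there exists a $!E$-over-$G$ domination chain in $F$. *)

From Stdlib Require Import List Relations.
Import ListNotations.
Set Implicit Arguments.

(* Formulas: atoms are naturals; negation only on atoms (NegAtom is a leaf,
   so an atom under a negation is not an occurrence of its own). *)
Inductive formula : Type :=
| Atom (a : nat)
| NegAtom (a : nat)
| FAnd (f g : formula)
| FOr (f g : formula)
| FBang (f : formula)
| FQuest (f : formula).

(* Occurrences (oformulas) of subformulas of F0 are given by paths from the
   root: 0/1 for the left/right argument of a binary connective, 0 for the
   argument of ! or ?. *)
Fixpoint sub (f : formula) (p : list nat) : option formula :=
  match p with
  | [] => Some f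
  | i :: p' =>
    match f, i with
    | FAnd a _, 0 | FOr a _, 0 => sub a p'
    | FAnd _ b, 1 | FOr _ b, 1 => sub b p'
    | FBang a, 0 | FQuest a, 0 => sub a p'
    | _, _ => None
    end
  end.

Fixpoint mdepth (f : formula) (p : list nat) : nat :=
  match p with
  | [] => 0
  | i :: p' =>
    match f, i with
    | FAnd a _, 0 | FOr a _, 0 => mdepth a p'
    | FAnd _ b, 1 | FOr _ b, 1 => mdepth b p'
    | FBang a, 0 | FQuest a, 0 => S (mdepth a p')
    | _, _ => 0
    end
  end.

Definition bitstring := nat -> bool.

(* A unit E[x1,...,xk] : the path of the oformula E and the tuple (x1..xk),
   listed outermost first. *)
Definition unit_ := (list nat * list bitstring)%type.

Definition is_unit (F0 : formula) (u : unit_) : Prop :=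
  sub F0 (fst u) <> None /\ length (snd u) = mdepth F0 (fst u).

Definition origin (F0 : formula) (u : unit_) : option formula := sub F0 (fst u).

Definition is_and_unit F0 u := exists a b, origin F0 u = Some (FAnd a b).
Definition is_or_unit F0 u := exists a b, origin F0 u = Some (FOr a b).
Definition is_bang_unit F0 u := exists a, origin F0 u = Some (FBang a).
Definition is_quest_unit F0 u := exists a, origin F0 u = Some (FQuest a).
Definition is_politeral_unit F0 u :=
  exists a, origin F0 u = Some (Atom a) \/ origin F0 u = Some (NegAtom a).

Definition child (F0 : formula) (u v : unit_) : Prop :=
  is_unit F0 u /\
  ( ((is_and_unit F0 u \/ is_or_unit F0 u) /\
      exists i, (i = 0 \/ i = 1) /\ v = (fst u ++ [i], snd u))
  \/ ((is_bang_unit F0 u \/ is_quest_unit F0 u) /\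
      exists y : bitstring, v = (fst u ++ [0], snd u ++ [y])) ).

Definition root : unit_ := ([], []).

(* subunit v u : v is a subunit of u  (u is a superunit of v) *)
Definition subunit (F0 : formula) (v u : unit_) : Prop :=
  clos_refl_trans unit_ (child F0) u v.

Definition smallest_common_superunit (F0 : formula) (E G H : unit_) : Prop :=
  is_unit F0 H /\ subunit F0 E H /\ subunit F0 G H /\
  forall K, is_unit F0 K -> subunit F0 E K -> subunit F0 G K -> subunit F0 H K.

Definition drives (F0 : formula) (E G H : unit_) : Prop :=
  smallest_common_superunit F0 E G H /\
  forall Q, is_unit F0 Q -> is_quest_unit F0 Q -> subunit F0 E Q -> Q <> E ->
    ~ subunit F0 Q H.

Definition unit_tree (F0 : formula) (S : unit_ -> Prop) : Prop :=
  (exists u, S u) /\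
  forall E, S E ->
    is_unit F0 E /\
    (forall K, is_unit F0 K -> subunit F0 E K -> S K) /\
    ((is_and_unit F0 E \/ is_or_unit F0 E) ->
        forall C, child F0 E C -> S C) /\
    ((is_bang_unit F0 E \/ is_quest_unit F0 E) ->
        exists C, child F0 E C /\ S C).

Inductive symb : Type := S0 | S1 | SDot | SOther (c : nat).
Definition move := list symb.
Inductive player : Type := PTop | PBot.
Definition pneg (p : player) : player := match p with PTop => PBot | PBot => PTop end.
Definition labmove := (player * move)%type.

(* A run (finite or infinite sequence of labmoves) is represented as a
   sequence with gaps: the run is the subsequence of the [Some] entries. *)
Definition run := nat -> option labmove.

Definition symb_eq_dec (a b : symb) : {a = b} + {a <> b}.
Proof. decide equality; apply PeanoNat.Nat.eq_dec. Defined.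

Fixpoint strip_prefix (alpha m : list symb) : option (list symb) :=
  match alpha, m with
  | [], _ => Some m
  | a :: al, c :: m' => if symb_eq_dec a c then strip_prefix al m' else None
  | _ :: _, [] => None
  end.

Definition run_prefix (alpha : list symb) (Th : run) : run :=
  fun n => match Th n with
           | Some (w, m) => match strip_prefix alpha m with
                            | Some b => Some (w, b)
                            | None => None
                            end
           | None => None
           end.

Fixpoint strip_bits (y : bitstring) (k : nat) (m : list symb) : option (list symb) :=
  match m with
  | SDot :: b => Some b
  | S0 :: m' => if y k then None else strip_bits y (S k) m'
  | S1 :: m' => if y k then strip_bits y (S k) m' else None
  | _ => None
  end.

Definition run_bits (y : bitstring) (Th : run) : run :=
  fun n => match Th n with
           | Some (w, m) => match strip_bits y 0 m with
                            | Some b => Some (w, b)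
                            | None => None
                            end
           | None => None
           end.

Definition bitsym (i : nat) : symb := if PeanoNat.Nat.eqb i 0 then S0 else S1.

Fixpoint proj (f : formula) (p : list nat) (xs : list bitstring) (Th : run) : run :=
  match p with
  | [] => Th
  | i :: p' =>
    match f with
    | FAnd a b | FOr a b =>
        proj (if PeanoNat.Nat.eqb i 0 then a else b) p' xs (run_prefix [bitsym i; SDot] Th)
    | FBang a | FQuest a =>
        match xs with
        | y :: xs' => proj a p' xs' (run_bits y Th)
        | [] => Th
        end
    | _ => Th
    end
  end.

Definition projection (F0 : formula) (Om : run) (u : unit_) : run :=
  proj F0 (fst u) (snd u) Om.

Definition labeled_moves (w : player) (Th : run) (b : move) : Prop :=
  exists n, Th n = Some (w, b).

Definition opposite (F0 : formula) (Om : run) (L M : unit_) : Prop :=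
  is_politeral_unit F0 L /\ is_politeral_unit F0 M /\
  (exists a, (origin F0 L = Some (Atom a) /\ origin F0 M = Some (NegAtom a)) \/
             (origin F0 L = Some (NegAtom a) /\ origin F0 M = Some (Atom a))) /\
  forall w b, labeled_moves w (projection F0 Om L) b <->
              labeled_moves (pneg w) (projection F0 Om M) b.

(* a !E-over-G domination chain: the list of triples (L_i, M_i, X_i),
   0-indexed, with L_n := G *)
Definition chainL (ch : list (unit_ * unit_ * unit_)) (G : unit_) (j : nat) : unit_ :=
  match nth_error ch j with Some (L, _, _) => L | None => G end.

Definition domination_chain (F0 : formula) (Om : run) (F : unit_ -> Prop)
    (B G : unit_) (ch : list (unit_ * unit_ * unit_)) : Prop :=
  length ch >= 1 /\
  (forall i L M X, nth_error ch i = Some (L, M, X) ->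
      opposite F0 Om L M /\ F L /\ F M /\
      drives F0 M (chainL ch G (S i)) X /\
      (forall j, S (S i) <= j <= length ch -> ~ exists Y, drives F0 M (chainL ch G j) Y) /\
      ~ subunit F0 M B) /\
  subunit F0 (chainL ch G 0) B.

Definition dominates (F0 : formula) (Om : run) (F : unit_ -> Prop) (B G : unit_) : Prop :=
  F B /\ F G /\
  ((subunit F0 G B /\ G <> B) \/ exists ch, domination_chain F0 Om F B G ch).

(* Units form a forest under the child relation: every unit has at most one
   parent and a child's path is one step longer, so the superunits of a unit
   are linearly ordered by "subunit".  Consequently, if M lies below a common
   superunit X of M and H, then M and H have a smallest common superunit
   below X; hence "M drives G" implies "M drives H" for every subunit H of G,
   since the ?-superunits of M that must be avoided only shrink.

   If G is a proper subunit of !E, so is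
   H.  Otherwise take a domination chain over G.  Its last M drives G and
   therefore H; let i be the FIRST index whose M_i drives H.  Truncating the
   chain after position i, and letting M_i drive H, gives a chain over H:
   condition 3 for the earlier M_k is exactly the minimality of i. *)

From Stdlib Require Import List Relations Lia Classical.
Import ListNotations.
Set Implicit Arguments.

Lemma child_length F0 u v : child F0 u v -> length (fst v) = S (length (fst u)).
Proof.
  intros [_ [[_ [i [_ ->]]] | [_ [y ->]]]]; simpl; rewrite length_app; simpl; lia.
Qed.

Lemma subunit_length F0 v u :
  subunit F0 v u -> u = v \/ length (fst u) < length (fst v).
Proof.
  intro Hvu. apply clos_rt_rtn1_iff in Hvu.
  induction Hvu as [|w v Hchild _ IH]; [now left|].
  right. apply child_length in Hchild. destruct IH as [->|]; lia.
Qed.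

Lemma subunit_antisym F0 a b : subunit F0 a b -> subunit F0 b a -> a = b.
Proof.
  intros Hab Hba.
  destruct (subunit_length Hab) as [|]; auto.
  destruct (subunit_length Hba) as [|]; auto. lia.
Qed.

(* Every unit has at most one parent: the path determines the connective,
   and the last coordinate is dropped. *)
Lemma parent_unique F0 a b v : child F0 a v -> child F0 b v -> a = b.
Proof.
  destruct a as [pa xa], b as [pb xb].
  intros [_ Ha] [_ Hb].
  destruct Ha as [[Ta [i [_ Ea]]] | [Ta [y Ea]]];
  destruct Hb as [[Tb [j [_ Eb]]] | [Tb [y' Eb]]]; subst v; simpl in *;
  injection Eb as Epath Ebits; apply app_inj_tail in Epath as [-> _].
  - now subst.
  - exfalso. destruct Ta as [[? [? Ha]]|[? [? Ha]]], Tb as [[? Hb]|[? Hb]];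
      unfold origin in *; simpl in *; congruence.
  - exfalso. destruct Tb as [[? [? Hb]]|[? [? Hb]]], Ta as [[? Ha]|[? Ha]];
      unfold origin in *; simpl in *; congruence.
  - now apply app_inj_tail in Ebits as [-> _].
Qed.

Lemma superunits_total F0 v K1 K2 :
  subunit F0 v K1 -> subunit F0 v K2 -> subunit F0 K1 K2 \/ subunit F0 K2 K1.
Proof.
  intros H1 H2. apply clos_rt_rtn1_iff in H2.
  revert K1 H1. induction H2 as [|w v Hchild Hpath IH]; intros K1 H1; [now right|].
  apply clos_rt_rtn1_iff in H1.
  inversion H1 as [|w' v' Hchild' Hpath']; subst.
  - left. apply clos_rt_rtn1_iff. econstructor; eauto.
  - rewrite (parent_unique Hchild' Hchild) in Hpath'.
    apply IH, clos_rt_rtn1_iff, Hpath'.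
Qed.

Lemma superunit_is_unit F0 v K : is_unit F0 v -> subunit F0 v K -> is_unit F0 K.
Proof.
  intros Hv HvK. apply clos_rt_rt1n_iff in HvK.
  destruct HvK as [|x y Hchild _]; [exact Hv | exact (proj1 Hchild)].
Qed.

Lemma least_witness (P : nat -> Prop) :
  (exists n, P n) -> exists n, P n /\ forall m, m < n -> ~ P m.
Proof.
  intros [n Pn]. induction n as [n IH] using (well_founded_induction Wf_nat.lt_wf).
  destruct (classic (exists m, m < n /\ P m)) as [[m [Hmn Pm]]|Hnone].
  - exact (IH m Hmn Pm).
  - exists n. split; [exact Pn|]. intros m Hmn Pm. apply Hnone; eauto.
Qed.

(* Two units with a common superunit X have a smallest common superunit,
   and it lies below X: take the lowest common superunit below X. *)
Lemma smallest_common_superunit_below F0 M H X :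
  is_unit F0 M -> subunit F0 M X -> subunit F0 H X ->
  exists Y, smallest_common_superunit F0 M H Y /\ subunit F0 Y X.
Proof.
  intros UM HMX HHX.
  set (common := fun K => subunit F0 M K /\ subunit F0 H K /\ subunit F0 K X).
  assert (Hbound : forall K, common K -> length (fst K) <= length (fst M)).
  { intros K [HMK _]. destruct (subunit_length HMK) as [->|]; lia. }
  destruct (least_witness
              (fun d => exists K, common K /\ length (fst M) - length (fst K) = d))
    as [d [[K [HK Hd]] Hlowest]].
  { exists (length (fst M) - length (fst X)), X.
    split; [split; [|split]; [exact HMX | exact HHX | apply rt_refl] | reflexivity]. }
  destruct HK as (HMK & HHK & HKX).
  exists K. split; [|exact HKX].
  split; [exact (superunit_is_unit UM HMK)|]. split; [exact HMK|]. split; [exact HHK|].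
  intros K' _ HMK' HHK'.
  destruct (superunits_total HMK HMK') as [|HK'K]; [assumption|].
  assert (HK' : common K') by (split; [|split]; auto; eapply rt_trans; eauto).
  destruct (subunit_length HK'K) as [->|Hdeeper]; [apply rt_refl|].
  exfalso. apply (Hlowest (length (fst M) - length (fst K'))).
  - specialize (Hbound K' HK'). lia.
  - exists K'. split; [exact HK' | reflexivity].
Qed.

Lemma drives_subunit F0 M G X H :
  is_unit F0 M -> drives F0 M G X -> subunit F0 H G -> exists Y, drives F0 M H Y.
Proof.
  intros UM [[_ [HMX [HGX _]]] Havoid] HHG.
  destruct (smallest_common_superunit_below UM HMX (rt_trans _ _ _ _ _ HGX HHG))
    as [Y [HY HYX]].
  exists Y. split; [exact HY|].
  intros Q UQ QQ HMQ HneQ HQY. apply (Havoid Q UQ QQ HMQ HneQ).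
  eapply rt_trans; eauto.
Qed.

Lemma chainL_length ch G : chainL ch G (length ch) = G.
Proof. unfold chainL. now rewrite (proj2 (nth_error_None ch (length ch))). Qed.

Section Truncation.
  Variables (ch : list (unit_ * unit_ * unit_)) (G H L M X Y : unit_) (i : nat).
  Hypothesis Hi : nth_error ch i = Some (L, M, X).

  Let ch' := firstn i ch ++ [(L, M, Y)].

  Lemma truncate_index_lt : i < length ch.
  Proof. apply nth_error_Some. congruence. Qed.

  Lemma truncate_firstn_length : length (firstn i ch) = i.
  Proof. apply firstn_length_le. pose proof truncate_index_lt. lia. Qed.

  Lemma truncate_length : length ch' = S i.
  Proof. unfold ch'. rewrite length_app, truncate_firstn_length. simpl. lia. Qed.

  Lemma truncate_nth_lt k : k < i -> nth_error ch' k = nth_error ch k.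
  Proof.
    intro Hk. unfold ch'. rewrite nth_error_app1 by (rewrite truncate_firstn_length; lia).
    rewrite nth_error_firstn. destruct (PeanoNat.Nat.ltb_spec k i); [reflexivity | lia].
  Qed.

  Lemma truncate_nth_eq : nth_error ch' i = Some (L, M, Y).
  Proof.
    unfold ch'. rewrite nth_error_app2 by (rewrite truncate_firstn_length; lia).
    now rewrite truncate_firstn_length, PeanoNat.Nat.sub_diag.
  Qed.

  Lemma truncate_nth_gt k : i < k -> nth_error ch' k = None.
  Proof. intro Hk. apply nth_error_None. rewrite truncate_length. lia. Qed.

  Lemma truncate_chainL_le j : j <= i -> chainL ch' H j = chainL ch G j.
  Proof.
    intro Hj. unfold chainL. destruct (PeanoNat.Nat.eq_dec j i) as [->|Hne].
    - now rewrite truncate_nth_eq, Hi.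
    - rewrite truncate_nth_lt by lia.
      destruct (nth_error ch j) eqn:Ej; [reflexivity|].
      apply nth_error_None in Ej. pose proof truncate_index_lt. lia.
  Qed.

  Lemma truncate_chainL_next : chainL ch' H (S i) = H.
  Proof. unfold chainL. now rewrite truncate_nth_gt by lia. Qed.

  Lemma truncate_domination_chain F0 Om F B :
    domination_chain F0 Om F B G ch ->
    drives F0 M H Y ->
    (forall k L' M' X', k < i -> nth_error ch k = Some (L', M', X') ->
       ~ exists Y', drives F0 M' H Y') ->
    domination_chain F0 Om F B H ch'.
  Proof.
    intros [_ [Hch Hstart]] HdrivesH Hearlier.
    split; [rewrite truncate_length; lia|]. split.
    - intros k L' M' X' Ek.
      destruct (PeanoNat.Nat.lt_total k i) as [Hk|[->|Hk]].
      + rewrite truncate_nth_lt in Ek by exact Hk.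
        destruct (Hch _ _ _ _ Ek) as (Hopp & FL & FM & Hdrv & Hnodrv & Hout).
        refine (conj Hopp (conj FL (conj FM (conj _ (conj _ Hout))))).
        * rewrite truncate_chainL_le by lia. exact Hdrv.
        * intros j Hj. destruct (PeanoNat.Nat.eq_dec j (S i)) as [->|Hj_ne].
          -- rewrite truncate_chainL_next. exact (Hearlier _ _ _ _ Hk Ek).
          -- rewrite truncate_length in Hj. rewrite truncate_chainL_le by lia.
             apply Hnodrv. pose proof truncate_index_lt. lia.
      + rewrite truncate_nth_eq in Ek. injection Ek as <- <- <-.
        destruct (Hch _ _ _ _ Hi) as (Hopp & FL & FM & _ & _ & Hout).
        refine (conj Hopp (conj FL (conj FM (conj _ (conj _ Hout))))).
        * rewrite truncate_chainL_next. exact HdrivesH.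
        * intros j Hj. rewrite truncate_length in Hj. lia.
      + now rewrite truncate_nth_gt in Ek.
    - rewrite truncate_chainL_le by lia. exact Hstart.
  Qed.
End Truncation.

(* A domination chain over G yields one over any subunit H of G: cut it at
   the first M_i driving H (the last M drives G, hence H). *)
Lemma domination_chain_subunit F0 Om F B G H ch :
  (forall u, F u -> is_unit F0 u) ->
  domination_chain F0 Om F B G ch -> subunit F0 H G ->
  exists ch', domination_chain F0 Om F B H ch'.
Proof.
  intros Hunits Hchain HHG.
  pose proof Hchain as [Hlen [Hch _]].
  set (drives_H := fun k => exists L M X, nth_error ch k = Some (L, M, X) /\
                                         exists Y, drives F0 M H Y).
  destruct (least_witness drives_H) as [i [[L [M [X [Ei [Y HY]]]]] Hfirst]].
  { exists (length ch - 1).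
    destruct (nth_error ch (length ch - 1)) as [[[L M] X]|] eqn:Elast.
    2: { apply nth_error_None in Elast. lia. }
    exists L, M, X. split; [exact Elast|].
    destruct (Hch _ _ _ _ Elast) as (_ & _ & FM & Hdrv & _).
    replace (S (length ch - 1)) with (length ch) in Hdrv by lia.
    rewrite chainL_length in Hdrv.
    exact (drives_subunit (Hunits M FM) Hdrv HHG). }
  exists (firstn i ch ++ [(L, M, Y)]).
  apply (truncate_domination_chain Ei Hchain HY).
  intros k L' M' X' Hk Ek Hdrv. apply (Hfirst k Hk). exists L', M', X'. eauto.
Qed.

Theorem lemma8p3 (F0 : formula) (Om : run) (F : unit_ -> Prop) (B G H : unit_) :
  unit_tree F0 F -> is_bang_unit F0 B -> F B -> F G -> F H ->
  dominates F0 Om F B G -> subunit F0 H G ->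
  dominates F0 Om F B H.
Proof.
  intros Htree _ HFB _ HFH [_ [_ Hdom]] HHG.
  assert (Hunits : forall u, F u -> is_unit F0 u)
    by (intros u Hu; exact (proj1 (proj2 Htree u Hu))).
  split; [exact HFB|]. split; [exact HFH|].
  destruct Hdom as [[HGB HneGB] | [ch Hchain]].
  - (* H lies below G, which is a proper subunit of B. *)
    left. split; [eapply rt_trans; eauto|].
    intros ->. apply HneGB. exact (subunit_antisym HGB HHG).
  - right. exact (domination_chain_subunit Hunits Hchain HHG).
Qed.
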